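(* Consider sequential first-price auctions in which all buyers have additive valuations. Then: (a) there is an absolute constant $c>0$ such that for every instance with $m$ items (any number of additive buyers, any selling-order function and any tie-breaking rule), the social welfare of every pure subgame perfect equilibrium is at least $c\cdot \mathrm{OPT}/m$, where $\mathrm{OPT}$ is the maximum possible social welfare; i.e., the price of anarchy is $O(m)$. (b) There is an absolute constant $c'>0$ such that for every $m$ there is an instance with exactly two additive buyers and $m$ identical items (every buyer has the same value for every item, so the selling order is irrelevant) whose price of anarchy is at least $c' m$. Hence the price of anarchy of sequential first-price auctions with additive buyers is $\Theta(m)$.
   Context: Setting (sequential first-price auctions): there is a set $M$ of $m$ items and a set $N$ of $n$ buyers. Buyer $i$ has a valuation $v_i:2^M\to\mathbb{R}_{\ge 0}$ with $v_i(\emptyset)=0$ and quasi-linear utility (value of the set of items obtained minus total payment). A buyer is additive if there are $v_{i,j}\ge 0$ with $v_i(S)=\sum_{j\in S}v_{i,j}$. Items are sold one at a time; each item is sold by a sealed-bid first-price auction without reserve price: every buyer submits a nonnegative bid, a highest bidder wins (ties broken by a tie-breaking rule fixed by the seller) and pays his bid. The seller fixes in advance a selling-order function choosing the next item as a function of the allocation of the items sold so far, together with the tie-breaking rule. There is full information (all valuations are common knowledge). A pure subgame perfect equilibrium (SPE) is a profile of pure strategies (a bid for each buyer at each node of the game tree) that is a Nash equilibrium in every subgame. The social welfare of an outcome is $\sum_i v_i(\text{bundle of } i)$. The price of anarchy of an instance is the ratio of the maximum social welfare over all allocations to the minimum social welfare of a pure SPE outcome. *)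

From HB Require Import structures.
From mathcomp Require Import all_boot all_order all_algebra.
From mathcomp Require Import Rstruct.

Set Implicit Arguments.
Unset Strict Implicit.
Unset Printing Implicit Defensive.

Import Order.TTheory GRing.Theory Num.Theory.
Local Open Scope ring_scope.

Notation RR := Rdefinitions.R.

Definition bids (n : nat) := {ffun 'I_n -> RR}.

(** Partial allocation of the items sold so far:
    [a j = Some i] iff item j was sold to buyer i; [None] = not yet sold. *)
Definition alloc (n m : nat) := {ffun 'I_m -> option 'I_n}.

Definition valid_order (n m : nat) (sigma : alloc n m -> 'I_m) : Prop :=
  forall a : alloc n m, (exists j, a j = None) -> a (sigma a) = None.

Definition valid_tb (n m : nat) (tb : alloc n m -> bids n -> 'I_n) : Prop :=
  forall (a : alloc n m) (b : bids n) (i : 'I_n), b i <= b (tb a b).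

Definition step (n m : nat) (sigma : alloc n m -> 'I_m)
  (tb : alloc n m -> bids n -> 'I_n)
  (st : alloc n m * {ffun 'I_n -> RR}) (b : bids n) :
  alloc n m * {ffun 'I_n -> RR} :=
  let: (a, p) := st in
  let j := sigma a in
  let w := tb a b in
  ([ffun k => if k == j then Some w else a k],
   [ffun k => if k == w then p k + b w else p k]).

Definition outcome (n m : nat) (sigma : alloc n m -> 'I_m)
  (tb : alloc n m -> bids n -> 'I_n) (h : seq (bids n)) :
  alloc n m * {ffun 'I_n -> RR} :=
  foldl (step sigma tb) ([ffun _ => None], [ffun _ => 0]) h.

(** A node of the game tree is a history of bid profiles (all bids >= 0).
    A pure strategy of a buyer gives a bid at each node. *)
Definition strategy (n : nat) := seq (bids n) -> RR.
Definition profile (n : nat) := 'I_n -> strategy n.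

Definition nonneg_strategy (n : nat) (d : strategy n) : Prop :=
  forall h, 0 <= d h.

Definition valid_hist (n : nat) (h : seq (bids n)) : bool :=
  all (fun b : bids n => [forall i, 0 <= b i]) h.

Definition bid_at (n : nat) (s : profile n) (h : seq (bids n)) : bids n :=
  [ffun i => s i h].

Definition play (n m : nat) (s : profile n) (h : seq (bids n)) : seq (bids n) :=
  iter (m - size h) (fun h' => rcons h' (bid_at s h')) h.

Definition deviate (n : nat) (s : profile n) (i : 'I_n) (d : strategy n) :
  profile n := fun k => if k == i then d else s k.

Definition value (n m : nat) (v : 'I_n -> 'I_m -> RR) (a : alloc n m)
  (i : 'I_n) : RR :=
  \sum_(j < m | a j == Some i) v i j.

Definition utility (n m : nat) (v : 'I_n -> 'I_m -> RR)
  (sigma : alloc n m -> 'I_m) (tb : alloc n m -> bids n -> 'I_n)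
  (h : seq (bids n)) (i : 'I_n) : RR :=
  value v (outcome sigma tb h).1 i - (outcome sigma tb h).2 i.

Definition is_SPE (n m : nat) (v : 'I_n -> 'I_m -> RR)
  (sigma : alloc n m -> 'I_m) (tb : alloc n m -> bids n -> 'I_n)
  (s : profile n) : Prop :=
  (forall i, nonneg_strategy (s i)) /\
  forall h : seq (bids n), valid_hist h -> (size h < m)%N ->
  forall (i : 'I_n) (d : strategy n), nonneg_strategy d ->
    utility v sigma tb (play m (deviate s i d) h) i
      <= utility v sigma tb (play m s h) i.

Definition welfare_alloc (n m : nat) (v : 'I_n -> 'I_m -> RR)
  (a : alloc n m) : RR :=
  \sum_i value v a i.

Definition spe_welfare (n m : nat) (v : 'I_n -> 'I_m -> RR)
  (sigma : alloc n m -> 'I_m) (tb : alloc n m -> bids n -> 'I_n)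
  (s : profile n) : RR :=
  welfare_alloc v (outcome sigma tb (play m s [::])).1.

Definition OPT (n m : nat) (v : 'I_n -> 'I_m -> RR) : RR :=
  \big[Num.max/0]_(f : {ffun 'I_m -> 'I_n}) \sum_(j < m) v (f j) j.

From mathcomp Require Import all_boot all_order all_algebra.
From mathcomp Require Import Rstruct zify lra.
Import Order.TTheory GRing.Theory Num.Theory.
Local Open Scope ring_scope.
Set Implicit Arguments.
Unset Strict Implicit.
Unset Printing Implicit Defensive.

(** Fix a buyer i and an item j.  At the node where j is sold,
    i may outbid the winner w by any delta > 0 and bid 0 afterwards, so in an
    SPE his final utility is at least his current one plus
    v i j - (b_w + delta); every other buyer can also bid 0 from then on, so
    keeps at least his current utility; and w pays b_w.  As the welfare is the
    total utility plus the total payment, the SPE welfare is at least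
    v i j - delta for every delta > 0, hence at least max v >= OPT / m.

    A keen buyer values every item at 1, an idle buyer values
    nothing.  Ties go to the idle buyer while the keen one holds nothing and
    at least two items are left; everybody bids 0 in that situation and 1
    otherwise.  The keen buyer then wins only the last item, for free: winning
    earlier costs a positive bid and makes every later item cost 1.  The
    welfare is 1 while OPT = m. *)

Lemma sumr_pred1 (V : nmodType) (I : finType) (i0 : I) (c : V) :
  \sum_(i : I) (if i == i0 then c else 0) = c.
Proof. by rewrite -big_mkcond big_pred1_eq. Qed.

Section Play.
Variables (n m : nat) (sigma : alloc n m -> 'I_m) (tb : alloc n m -> bids n -> 'I_n).
Hypothesis sigma_valid : valid_order sigma.

Local Notation sold h := (outcome sigma tb h).1.
Local Notation paid h := (outcome sigma tb h).2.

Lemma outcome_rcons h b :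
  outcome sigma tb (rcons h b) = step sigma tb (outcome sigma tb h) b.
Proof. by rewrite /outcome foldl_rcons. Qed.

Lemma sold_rcons h b :
  sold (rcons h b) =
  [ffun j => if j == sigma (sold h) then Some (tb (sold h) b) else sold h j].
Proof. by rewrite outcome_rcons; case: (outcome _ _ h). Qed.

Lemma paid_rcons h b k :
  paid (rcons h b) k = paid h k + (if tb (sold h) b == k then b k else 0).
Proof.
rewrite outcome_rcons; case: (outcome _ _ h) => a p /=; rewrite ffunE.
by case: eqVneq => [->|_]; rewrite ?addr0.
Qed.

Lemma exists_unsold (a : alloc n m) :
  (#|[set j | a j != None]| < m)%N -> exists j, a j = None.
Proof.
case: (pickP (fun j => a j == None)) => [j /eqP|all_sold]; first by exists j.
suff -> : [set j | a j != None] = setT by rewrite cardsT card_ord ltnn.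
by apply/setP => j; rewrite !inE all_sold.
Qed.

Lemma card_sold h : (size h <= m)%N -> #|[set j | sold h j != None]| = size h.
Proof.
elim/last_ind: h => [|h b IH]; rewrite ?size_rcons => size_h.
  by apply/eqP; rewrite cards_eq0; apply/eqP/setP => j; rewrite /outcome !inE ffunE.
have {}IH := IH (ltnW size_h).
have next_unsold : sold h (sigma (sold h)) = None.
  by apply: sigma_valid; apply: exists_unsold; rewrite IH.
have -> : [set j | sold (rcons h b) j != None] =
          sigma (sold h) |: [set j | sold h j != None].
  by apply/setP => j; rewrite !inE sold_rcons ffunE; case: (eqVneq j).
by rewrite cardsU1 inE next_unsold IH.
Qed.

Lemma next_unsold h : (size h < m)%N -> sold h (sigma (sold h)) = None.
Proof.
by move=> size_h; apply: sigma_valid; apply: exists_unsold; rewrite card_sold // ltnW.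
Qed.

Lemma card_unsold h : (size h <= m)%N -> #|[set j | sold h j == None]| = (m - size h)%N.
Proof.
move=> size_h; have := cardsC [set j | sold h j != None].
rewrite card_sold // cardT size_enum_ord.
have -> : ~: [set j | sold h j != None] = [set j | sold h j == None].
  by apply/setP => j; rewrite !inE negbK.
lia.
Qed.

Lemma sold_at_end h j : size h = m -> sold h j != None.
Proof.
move=> size_h; have := card_unsold (eq_leq size_h); rewrite size_h subnn.
by move/cards0_eq/setP/(_ j); rewrite !inE => ->.
Qed.

Variable v : 'I_n -> 'I_m -> RR.

Lemma value_update (a : alloc n m) j w i : a j = None ->
  value v [ffun k => if k == j then Some w else a k] i =
  value v a i + (if w == i then v i j else 0).
Proof.
move=> unsold_j; rewrite /value !(big_mkcond (fun k => _ == Some i)) /=.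
rewrite -[in RHS](sumr_pred1 j (if w == i then v i j else 0)) -big_split /=.
apply: eq_bigr => k _; rewrite ffunE.
case: (eqVneq k j) => [->|_]; last by rewrite addr0.
by rewrite unsold_j add0r (inj_eq Some_inj); case: (w == i).
Qed.

Lemma value_rcons h b i : (size h < m)%N ->
  value v (sold (rcons h b)) i =
  value v (sold h) i + (if tb (sold h) b == i then v i (sigma (sold h)) else 0).
Proof. by move=> size_h; rewrite sold_rcons value_update ?next_unsold. Qed.

Lemma utility_rcons h b i : (size h < m)%N ->
  utility v sigma tb (rcons h b) i = utility v sigma tb h i +
   (if tb (sold h) b == i then v i (sigma (sold h)) - b i else 0).
Proof.
move=> size_h; rewrite /utility value_rcons // paid_rcons.
by case: ifP => _; rewrite ?addr0 ?subr0 //; lra.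
Qed.

Lemma welfare_utility_paid h :
  welfare_alloc v (sold h) = \sum_k (utility v sigma tb h k + paid h k).
Proof. by apply: eq_bigr => k _; rewrite /utility subrK. Qed.

Lemma play_done (s : profile n) h : (m <= size h)%N -> play m s h = h.
Proof. by rewrite -subn_eq0 /play => /eqP ->. Qed.

Lemma play_step (s : profile n) h : (size h < m)%N ->
  play m s h = play m s (rcons h (bid_at s h)).
Proof.
move=> size_h; rewrite /play size_rcons.
by rewrite (_ : (m - size h = (m - (size h).+1).+1)%N) ?iterSr //; lia.
Qed.

Lemma play_ind (s : profile n) (Q : seq (bids n) -> seq (bids n) -> Prop) :
  (forall h, (m <= size h)%N -> Q h h) ->
  (forall h, (size h < m)%N ->
     Q (rcons h (bid_at s h)) (play m s (rcons h (bid_at s h))) ->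
     Q h (play m s (rcons h (bid_at s h)))) ->
  forall h, Q h (play m s h).
Proof.
move=> Q_end Q_step h; move Er : (m - size h)%N => r; elim: r h Er => [|r IH] h Er.
  by rewrite play_done; [apply: Q_end|]; lia.
have size_h : (size h < m)%N by lia.
by rewrite play_step //; apply: Q_step => //; apply: IH; rewrite size_rcons; lia.
Qed.

Lemma paid_play (s : profile n) h k :
  (forall i h', 0 <= s i h') -> paid h k <= paid (play m s h) k.
Proof.
move=> s_ge0; move: h; apply: (play_ind (Q := fun h x => paid h k <= paid x k)) => // h _.
by apply: le_trans; rewrite paid_rcons lerDl; case: ifP => // _; rewrite ffunE.
Qed.

Hypothesis v_ge0 : forall i j, 0 <= v i j.

Lemma utility_play_silent (s : profile n) i h0 :
  (forall h, (size h0 <= size h)%N -> s i h = 0) ->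
  utility v sigma tb h0 i <= utility v sigma tb (play m s h0) i.
Proof.
move=> silent.
suff : forall h, (size h0 <= size h)%N ->
  utility v sigma tb h i <= utility v sigma tb (play m s h) i by apply.
apply: (play_ind (Q := fun h x => (size h0 <= size h)%N ->
  utility v sigma tb h i <= utility v sigma tb x i)) => // h size_h IH h0_h.
apply: le_trans (IH _); last by rewrite size_rcons; lia.
by rewrite utility_rcons // lerDl; case: ifP => // _; rewrite ffunE silent // subr0.
Qed.

End Play.

Lemma welfare_ge0 n m (v : 'I_n -> 'I_m -> RR) a :
  (forall i j, 0 <= v i j) -> 0 <= welfare_alloc v a.
Proof. by move=> v_ge0; do 2 apply: sumr_ge0 => ? _; apply: v_ge0. Qed.

Lemma OPT_le_mul n m (v : 'I_n -> 'I_m -> RR) M :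
  0 <= M -> (forall i j, v i j <= M) -> OPT v <= m%:R * M.
Proof.
move=> M_ge0 v_le; apply: bigmax_le => [|f _]; first by rewrite mulr_ge0.
apply: le_trans (ler_sum _ (fun j _ => v_le (f j) j)) _.
by rewrite sumr_const card_ord mulr_natl.
Qed.

Section SPEWelfare.
Variables (n m : nat) (v : 'I_n -> 'I_m -> RR).
Variables (sigma : alloc n m -> 'I_m) (tb : alloc n m -> bids n -> 'I_n) (s : profile n).
Hypotheses (v_ge0 : forall i j, 0 <= v i j) (sigma_valid : valid_order sigma).
Hypotheses (tb_valid : valid_tb tb) (s_SPE : is_SPE v sigma tb s).

Local Notation sold h := (outcome sigma tb h).1.
Local Notation paid h := (outcome sigma tb h).2.
Local Notation U h i := (utility v sigma tb h i).

Lemma SPE_bid_ge0 i h : 0 <= s i h.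
Proof. by case: s_SPE => bid_ge0 _; apply: bid_ge0. Qed.

Lemma SPE_utility_play h k :
  valid_hist h -> (size h < m)%N -> U h k <= U (play m s h) k.
Proof.
move=> valid_h size_h; case: s_SPE => _ /(_ h valid_h size_h k _ (fun _ => lexx 0)).
apply: le_trans; apply: utility_play_silent => // h' _; by rewrite /deviate eqxx.
Qed.

Lemma SPE_overbid h i (delta : RR) : valid_hist h -> (size h < m)%N -> 0 < delta ->
  U h i + (v i (sigma (sold h)) - (bid_at s h (tb (sold h) (bid_at s h)) + delta))
  <= U (play m s h) i.
Proof.
move=> valid_h size_h delta_gt0.
set B := bid_at s h; set w := tb (sold h) B.
pose d : strategy n := fun h' => if h' == h then B w + delta else 0.
have d_ge0 : nonneg_strategy d.
  move=> h'; rewrite /d; case: ifP => // _.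
  by rewrite addr_ge0 ?(ltW delta_gt0) // /B ffunE SPE_bid_ge0.
case: s_SPE => _ /(_ h valid_h size_h i d d_ge0); apply: le_trans.
set s' := deviate s i d; set B' := bid_at s' h.
have B'_i : B' i = B w + delta by rewrite /B' ffunE /s' /deviate eqxx /d eqxx.
have B'_k k : k != i -> B' k = B k.
  by move=> ne_ki; rewrite /B' /B !ffunE /s' /deviate (negbTE ne_ki).
have wins : tb (sold h) B' = i.
  apply/eqP/negPn/negP => lose.
  have := tb_valid (sold h) B' i; have := tb_valid (sold h) B (tb (sold h) B').
  rewrite B'_i B'_k // -/w; lra.
have silent h' : (size (rcons h B') <= size h')%N -> s' i h' = 0.
  by rewrite size_rcons /s' /deviate eqxx /d; case: eqVneq => [->|//]; rewrite ltnn.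
rewrite (play_step s' size_h); apply: le_trans (utility_play_silent tb sigma_valid v_ge0 silent).
by rewrite utility_rcons // wins eqxx B'_i.
Qed.

Lemma SPE_welfare_ge_unsold i j (delta : RR) : 0 < delta ->
  forall h, valid_hist h -> (size h <= m)%N -> sold h j = None ->
  v i j <= welfare_alloc v (sold (play m s h)) + delta.
Proof.
move=> delta_gt0; apply: (play_ind (Q := fun h x => valid_hist h -> (size h <= m)%N ->
  sold h j = None -> v i j <= welfare_alloc v (sold x) + delta)).
  move=> h ge_m _ le_m unsold_j.
  have size_h : size h = m by apply/eqP; rewrite eqn_leq le_m ge_m.
  by have := sold_at_end tb sigma_valid j size_h; rewrite unsold_j.
move=> h size_h IH valid_h _ unsold_j.
set B := bid_at s h; set x := play m s (rcons h B).
have valid_hB : valid_hist (rcons h B).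
  rewrite /valid_hist all_rcons; apply/andP; split => //.
  by apply/forallP => k; rewrite ffunE SPE_bid_ge0.
have [sells_j|keeps_j] := eqVneq (sigma (sold h)) j; last first.
  apply: IH => //; first by rewrite size_rcons.
  by rewrite sold_rcons ffunE eq_sym (negbTE keeps_j).
set w := tb (sold h) B.
have Ux k : U h k + (if k == i then v i j - (B w + delta) else 0) <= U x k.
  rewrite /x -(play_step _ size_h).
  case: eqVneq => [->|_]; last by rewrite addr0 SPE_utility_play.
  by rewrite -sells_j; exact: SPE_overbid.
have Px k : paid h k + (if k == w then B w else 0) <= paid x k.
  apply: le_trans (paid_play sigma tb _ _ SPE_bid_ge0).
  by rewrite paid_rcons -/w; case: (eqVneq w k) => [->|].
have gain : welfare_alloc v (sold h) + (v i j - delta) <= welfare_alloc v (sold x).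
  rewrite [in leRHS]welfare_utility_paid.
  apply: le_trans (ler_sum _ (fun k _ => lerD (Ux k) (Px k))).
  under eq_bigr => k _ do rewrite addrACA.
  rewrite big_split -welfare_utility_paid big_split /= !sumr_pred1; lra.
have := welfare_ge0 (sold h) v_ge0; lra.
Qed.

Lemma SPE_welfare_ge_value i j : v i j <= spe_welfare v sigma tb s.
Proof.
apply/ler_addgt0Pr => delta delta_gt0.
by apply: SPE_welfare_ge_unsold => //; rewrite /outcome /= ffunE.
Qed.

Lemma OPT_le_SPE_welfare : OPT v <= m%:R * spe_welfare v sigma tb s.
Proof. exact: OPT_le_mul (welfare_ge0 _ v_ge0) SPE_welfare_ge_value. Qed.

End SPEWelfare.

Definition first_unsold n m (j0 : 'I_m) (a : alloc n m) : 'I_m :=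
  odflt j0 [pick j | a j == None].

Lemma first_unsold_valid n m (j0 : 'I_m) : valid_order (@first_unsold n m j0).
Proof.
move=> a [j unsold_j]; rewrite /first_unsold; case: pickP => [j' /eqP //|none].
by have := none j; rewrite unsold_j eqxx.
Qed.

Section TwoBuyers.
Variables (m : nat) (sigma : alloc 2 m -> 'I_m).
Hypothesis sigma_valid : valid_order sigma.

Definition keen : 'I_2 := ord0.
Definition idle : 'I_2 := ord_max.

Lemma buyer2P (k : 'I_2) : k = keen \/ k = idle.
Proof. by case: k => [[|[|k]] lt_k2]; [left|right|by []]; apply: val_inj. Qed.

Lemma idle_keenF : (idle == keen) = false. Proof. by []. Qed.

Definition keen_val (i : 'I_2) (j : 'I_m) : RR := if i == keen then 1 else 0.
Definition keen_empty (a : alloc 2 m) : bool := [forall j, a j != Some keen].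
Definition two_unsold (a : alloc 2 m) : bool := (2 <= #|[set j | a j == None]|)%N.

Definition lazy_tb (a : alloc 2 m) (b : bids 2) : 'I_2 :=
  if (b keen < b idle) || [&& b keen == b idle, keen_empty a & two_unsold a]
  then idle else keen.

Definition lazy_profile : profile 2 :=
  fun _ h => if keen_empty (outcome sigma lazy_tb h).1 then 0 else 1.

Local Notation sold h := (outcome sigma lazy_tb h).1.
Local Notation U h i := (utility keen_val sigma lazy_tb h i).

Lemma lazy_tb_valid : valid_tb lazy_tb.
Proof.
move=> a b i; rewrite /lazy_tb.
case: ifP => [/orP[/ltW|/and3P[/eqP tie _ _]]|/negbT].
- by case: (buyer2P i) => ->.
- by case: (buyer2P i) => ->; rewrite ?tie.
- by rewrite negb_or -leNgt => /andP[le _]; case: (buyer2P i) => ->.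
Qed.

Lemma keen_empty_rcons h b : (size h < m)%N ->
  keen_empty (sold (rcons h b)) = keen_empty (sold h) && (lazy_tb (sold h) b != keen).
Proof.
move=> size_h; have next := next_unsold lazy_tb sigma_valid size_h.
apply/forallP/andP => [not_keen|[/forallP not_keen keen_loses] j].
- split; last by have := not_keen (sigma (sold h)); rewrite sold_rcons ffunE eqxx.
  apply/forallP => j; have := not_keen j; rewrite sold_rcons ffunE.
  by case: (eqVneq j (sigma (sold h))) => [->|]; rewrite ?next.
- rewrite sold_rcons ffunE.
  by case: (eqVneq j (sigma (sold h))) => _ //; rewrite (inj_eq Some_inj).
Qed.

Lemma two_unsoldE h : (size h <= m)%N -> two_unsold (sold h) = (size h + 2 <= m)%N.
Proof. by move=> size_h; rewrite /two_unsold card_unsold //; apply/idP/idP; lia. Qed.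

Lemma utility_keen_rcons h b : (size h < m)%N ->
  U (rcons h b) keen = U h keen + (if lazy_tb (sold h) b == keen then 1 - b keen else 0).
Proof. by move=> size_h; rewrite utility_rcons // /keen_val eqxx. Qed.

Lemma utility_idle_rcons h b : (size h < m)%N ->
  U (rcons h b) idle = U h idle + (if lazy_tb (sold h) b == idle then - b idle else 0).
Proof. by move=> size_h; rewrite utility_rcons // /keen_val sub0r. Qed.

Definition keen_prospect h : RR :=
  U h keen + (if keen_empty (sold h) && (size h < m)%N then 1 else 0).

Lemma keen_prospect_end h : (m <= size h)%N -> keen_prospect h = U h keen.
Proof. by rewrite /keen_prospect leqNgt => /negbTE ->; rewrite andbF addr0. Qed.

Lemma keen_prospect_rcons h (b : bids 2) : (size h < m)%N -> 0 <= b keen ->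
  b idle = lazy_profile idle h -> keen_prospect (rcons h b) <= keen_prospect h.
Proof.
move=> size_h b_keen b_idle.
rewrite /keen_prospect utility_keen_rcons // keen_empty_rcons // size_rcons size_h andbT.
have := lazy_tb_valid (sold h) b idle.
case: (buyer2P (lazy_tb (sold h) b)) => ->; rewrite ?eqxx ?idle_keenF /=.
  by rewrite andbF addr0 b_idle /lazy_profile; case: ifP => _; lra.
by case: (keen_empty (sold h)) => /=; [case: ifP => _|]; lra.
Qed.

Lemma keen_prospect_lazy h : (size h < m)%N ->
  keen_prospect (rcons h (bid_at lazy_profile h)) = keen_prospect h.
Proof.
move=> size_h; rewrite /keen_prospect utility_keen_rcons // keen_empty_rcons //.
rewrite size_rcons size_h andbT.
have bid_lazy k : bid_at lazy_profile h k = if keen_empty (sold h) then 0 else 1.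
  by rewrite ffunE.
have winner : lazy_tb (sold h) (bid_at lazy_profile h) =
    if keen_empty (sold h) && two_unsold (sold h) then idle else keen.
  by rewrite /lazy_tb !bid_lazy ltxx eqxx.
rewrite winner two_unsoldE ?(ltnW size_h) // bid_lazy.
have -> : ((size h).+1 < m)%N = (size h + 2 <= m)%N by apply/idP/idP; lia.
by case: (keen_empty (sold h)); case: (size h + 2 <= m)%N;
  rewrite /= ?eqxx ?idle_keenF /=; lra.
Qed.

Lemma keen_deviation (s : profile 2) :
  (forall h, s idle h = lazy_profile idle h) -> (forall h, 0 <= s keen h) ->
  forall h, U (play m s h) keen <= keen_prospect h.
Proof.
move=> s_idle s_keen; apply: (play_ind (Q := fun h x => U x keen <= keen_prospect h)).
  by move=> h ge_m; rewrite keen_prospect_end.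
by move=> h size_h; move/le_trans; apply; apply: keen_prospect_rcons; rewrite ?ffunE.
Qed.

Lemma keen_lazy_utility h : U (play m lazy_profile h) keen = keen_prospect h.
Proof.
move: h; apply: (play_ind (Q := fun h x => U x keen = keen_prospect h)).
  by move=> h ge_m; rewrite keen_prospect_end.
by move=> h size_h ->; apply: keen_prospect_lazy.
Qed.

Lemma idle_deviation (s : profile 2) : (forall k h, 0 <= s k h) ->
  forall h, U (play m s h) idle <= U h idle.
Proof.
move=> s_ge0; apply: (play_ind (Q := fun h x => U x idle <= U h idle)) => // h size_h.
move/le_trans; apply; rewrite utility_idle_rcons //; case: ifP => _; last by rewrite addr0.
by rewrite ffunE; have := s_ge0 idle h; lra.
Qed.

Lemma idle_lazy_utility h : U (play m lazy_profile h) idle = U h idle.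
Proof.
move: h; apply: (play_ind (Q := fun h x => U x idle = U h idle)) => // h size_h ->.
rewrite utility_idle_rcons //; case: ifP => wins; last by rewrite addr0.
rewrite ffunE /lazy_profile; case: ifP => empty; first by rewrite oppr0 addr0.
by move: wins; rewrite /lazy_tb !ffunE /lazy_profile empty ltxx /= andbF.
Qed.

Lemma lazy_profile_ge0 k h : 0 <= lazy_profile k h.
Proof. by rewrite /lazy_profile; case: ifP. Qed.

Lemma lazy_profile_SPE : is_SPE keen_val sigma lazy_tb lazy_profile.
Proof.
split=> [i h|h _ size_h i d d_ge0]; first exact: lazy_profile_ge0.
case: (buyer2P i) => ->.
  by rewrite keen_lazy_utility; apply: keen_deviation => h'; rewrite /deviate ?idle_keenF ?eqxx.
rewrite idle_lazy_utility; apply: idle_deviation => k h'.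
by rewrite /deviate; case: ifP => _; [exact: d_ge0 | exact: lazy_profile_ge0].
Qed.

Lemma value_keen_empty a : keen_empty a -> value keen_val a keen = 0.
Proof.
by move=> /forallP none; rewrite /value big_mkcond big1 // => j _; rewrite (negbTE (none j)).
Qed.

Lemma value_idle a : value keen_val a idle = 0.
Proof. by rewrite /value big1. Qed.

Lemma keen_value_lazy h : keen_empty (sold h) ->
  value keen_val (sold (play m lazy_profile h)) keen = if (size h < m)%N then 1 else 0.
Proof.
move: h; apply: (play_ind (Q := fun h x => keen_empty (sold h) ->
  value keen_val (sold x) keen = if (size h < m)%N then 1 else 0)).
  by move=> h ge_m empty; rewrite value_keen_empty // ltnNge ge_m.
move=> h size_h IH empty; rewrite size_h.
have winner : lazy_tb (sold h) (bid_at lazy_profile h) = if two_unsold (sold h) then idle else keen.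
  by rewrite /lazy_tb !ffunE /lazy_profile empty ltxx eqxx.
move: (two_unsoldE (ltnW size_h)) winner.
case: (two_unsold (sold h)) => two_left winner.
  rewrite IH; last by rewrite keen_empty_rcons // empty winner.
  by rewrite size_rcons ifT //; lia.
rewrite play_done; last by rewrite size_rcons; lia.
by rewrite value_rcons // winner eqxx value_keen_empty // /keen_val eqxx add0r.
Qed.

Lemma lazy_welfare : (0 < m)%N -> spe_welfare keen_val sigma lazy_tb lazy_profile = 1.
Proof.
move=> m_gt0; rewrite /spe_welfare /welfare_alloc -(sumr_pred1 keen 1).
apply: eq_bigr => k _; case: (buyer2P k) => ->; rewrite ?idle_keenF ?value_idle //.
by rewrite eqxx keen_value_lazy ?m_gt0 //; apply/forallP => j; rewrite /outcome /= ffunE.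
Qed.

Lemma keen_val_OPT : OPT keen_val = m%:R.
Proof.
apply/eqP; rewrite eq_le; apply/andP; split.
  rewrite -[leRHS]mulr1; apply: OPT_le_mul => [|i j]; first exact: ler01.
  by rewrite /keen_val; case: ifP.
have := @le_bigmax_cond _ _ _ 0 [ffun _ => keen] predT
  (fun f : {ffun 'I_m -> 'I_2} => \sum_(j < m) keen_val (f j) j) isT.
by apply: le_trans; rewrite (eq_bigr (fun _ => 1)) ?sumr_const ?card_ord // => j _; rewrite ffunE.
Qed.

End TwoBuyers.

Theorem mainTheorem1 :
  (exists c : RR, 0 < c /\
    forall (n m : nat) (v : 'I_n -> 'I_m -> RR)
      (sigma : alloc n m -> 'I_m) (tb : alloc n m -> bids n -> 'I_n),
      (forall i j, 0 <= v i j) -> valid_order sigma -> valid_tb tb ->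
      forall s : profile n, is_SPE v sigma tb s ->
        c * OPT v / m%:R <= spe_welfare v sigma tb s)
  /\
  (exists c' : RR, 0 < c' /\
    forall m : nat, (0 < m)%N ->
      exists (v : 'I_2 -> 'I_m -> RR) (sigma : alloc 2 m -> 'I_m)
             (tb : alloc 2 m -> bids 2 -> 'I_2),
        [/\ (forall i j, 0 <= v i j),
            (forall i j j', v i j = v i j'),
            valid_order sigma, valid_tb tb & 0 < OPT v] /\
        exists s : profile 2, is_SPE v sigma tb s /\
          c' * m%:R * spe_welfare v sigma tb s <= OPT v).
Proof.
split; exists 1; split=> //.
  move=> n m v sigma tb v_ge0 sigma_valid tb_valid s s_SPE; rewrite mul1r.
  have [m0|m_gt0] := posnP m.
    by rewrite (_ : m%:R = 0) ?m0 // invr0 mulr0; exact: welfare_ge0.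
  by rewrite ler_pdivrMr ?ltr0n // mulrC OPT_le_SPE_welfare.
move=> m m_gt0; have sigma_valid := @first_unsold_valid 2 m (Ordinal m_gt0).
exists (@keen_val m), (first_unsold (Ordinal m_gt0)), (@lazy_tb m); split.
  split=> //.
  - by move=> i j; rewrite /keen_val; case: ifP.
  - exact: lazy_tb_valid.
  - by rewrite keen_val_OPT ltr0n.
exists (lazy_profile (first_unsold (Ordinal m_gt0))).
by rewrite lazy_welfare // keen_val_OPT mul1r mulr1; split=> //; exact: lazy_profile_SPE.
Qed.
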